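(* Let $M$ be a manifold with a complete Riemannian metric $g_R$ and associated distance $d_R$. Let $S$ be a closed subset of $M$ and $\mathcal{W}=\{W_\alpha:\alpha\in\mathcal{I}\}$ a collection of open subsets of $M$ covering $S$, such that each $W_\alpha$ is contained in an open subset $\mathcal{C}_\alpha$ whose $d_R$-diameter is smaller than $1$. Then there exists a subcollection $\mathcal{W}'=\{W_j: j\in\mathbb{N}\}\subset\mathcal{W}$ which covers $S$ and is locally finite (i.e., each $p\in\bigcup_j W_j$ has a neighborhood $V$ with $V\cap W_j=\emptyset$ for all but finitely many $j$). Moreover, the collection $\{\mathcal{C}_j: j\in\mathbb{N}\}$, where $\mathcal{C}_j$ is the open set containing $W_j$, is locally finite too. *)

From Stdlib Require Import Reals List.
Open Scope R_scope.

Section MetricDefs.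
Context {M : Type} (d : M -> M -> R).

Definition is_metric : Prop :=
  (forall x y, 0 <= d x y) /\
  (forall x y, d x y = 0 <-> x = y) /\
  (forall x y, d x y = d y x) /\
  (forall x y z, d x z <= d x y + d y z).

Definition mopen (U : M -> Prop) : Prop :=
  forall x, U x -> exists e, 0 < e /\ forall y, d x y < e -> U y.

Definition mclosed (F : M -> Prop) : Prop :=
  mopen (fun x => ~ F x).

Definition mcompact (K : M -> Prop) : Prop :=
  forall (J : Type) (U : J -> M -> Prop),
    (forall j, mopen (U j)) ->
    (forall x, K x -> exists j, U j x) ->
    exists l : list J, forall x, K x -> exists j, In j l /\ U j x.

(* Hopf-Rinow: for a complete Riemannian metric, closed bounded sets
   (equivalently, closed balls) are compact. *)
Definition proper_metric : Prop :=
  forall x r, mcompact (fun y => d x y <= r).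

Definition diam_lt1 (C : M -> Prop) : Prop :=
  exists r, r < 1 /\ forall x y, C x -> C y -> d x y <= r.

Definition locally_finite_on {I : Type} (J : I -> Prop) (F : I -> M -> Prop)
  : Prop :=
  forall p, (exists a, J a /\ F a p) ->
    exists V : M -> Prop, mopen V /\ V p /\
      exists l : list I, forall a, J a -> (exists x, V x /\ F a x) -> In a l.

End MetricDefs.

Definition countable_idx {I : Type} (J : I -> Prop) : Prop :=
  exists f : I -> nat, forall a b, J a -> J b -> f a = f b -> a = b.

(* Fix a base point o and cut S into the shells K_n = S ∩ {n <= d(o,x) <= n+1}.
   Each shell is a closed subset of a closed ball, hence compact, so finitely
   many members of W cover it; keep only members that meet it.  A unit ball around p meets C_a,
   of diameter < 1, only if W_a ⊆ C_a lies within distance 2 of p; since W_a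
   meets the shell it was chosen for, only the finitely many shells with
   n < d(o,p) + 2 can contribute, which gives local finiteness of the C_a and
   a fortiori of the W_a. *)
From Stdlib Require Import Reals List.
From Stdlib Require Import ZArith Lra Lia Classical ClassicalEpsilon Cantor.
Open Scope R_scope.

Lemma nat_floor (r : R) : 0 <= r -> exists n : nat, INR n <= r < INR n + 1.
Proof.
  intros r_ge0.
  destruct (base_Int_part r) as [floor_le floor_gt].
  assert (floor_ge0 : (0 <= Int_part r)%Z).
  { assert (-1 < Int_part r)%Z by (apply lt_IZR; lra). lia. }
  exists (Z.to_nat (Int_part r)).
  rewrite INR_IZR_INZ, Z2Nat.id by exact floor_ge0. lra.
Qed.

Lemma countable_idx_list_union {I : Type} (l : nat -> list I) :
  countable_idx (fun a => exists n, In a (l n)).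
Proof.
  set (position a nk := nth_error (l (fst nk)) (snd nk) = Some a).
  assert (position_ex : forall a, (exists n, In a (l n)) -> exists nk, position a nk).
  { intros a [n a_in]. destruct (In_nth_error _ _ a_in) as [k hk].
    now exists (n, k). }
  exists (fun a => Cantor.to_nat (epsilon (inhabits (0%nat, 0%nat)) (position a))).
  intros a b ha hb same_code.
  pose proof (epsilon_spec (inhabits (0%nat, 0%nat)) _ (position_ex a ha)) as pos_a.
  pose proof (epsilon_spec (inhabits (0%nat, 0%nat)) _ (position_ex b hb)) as pos_b.
  apply (f_equal Cantor.of_nat) in same_code.
  rewrite !Cantor.cancel_of_to in same_code.
  unfold position in *. rewrite same_code, pos_b in pos_a.
  congruence.
Qed.

Section MetricTopology.
Context {M : Type} (d : M -> M -> R).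

Lemma mclosed_and (F G : M -> Prop) :
  mclosed d F -> mclosed d G -> mclosed d (fun x => F x /\ G x).
Proof.
  intros F_closed G_closed x not_FG.
  destruct (classic (F x)) as [Fx | nFx].
  - assert (nGx : ~ G x) by tauto.
    destruct (G_closed x nGx) as [e [e_pos ball_e]].
    exists e. split; [exact e_pos|]. intros y dy [_ Gy]. exact (ball_e y dy Gy).
  - destruct (F_closed x nFx) as [e [e_pos ball_e]].
    exists e. split; [exact e_pos|]. intros y dy [Fy _]. exact (ball_e y dy Fy).
Qed.

Lemma mcompact_closed_subset (K F : M -> Prop) :
  mcompact d K -> mclosed d F -> (forall x, F x -> K x) -> mcompact d F.
Proof.
  intros K_compact F_closed FK J U U_open U_cover.
  set (V (j : option J) :=
         match j with Some j => U j | None => fun x => ~ F x end).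
  destruct (K_compact (option J) V) as [l l_cover].
  - intros [j|]; [apply U_open | exact F_closed].
  - intros x _. destruct (classic (F x)) as [Fx | nFx].
    + destruct (U_cover x Fx) as [j Ujx]. now exists (Some j).
    + now exists None.
  - exists (flat_map (fun j => match j with Some j => j :: nil | None => nil end) l).
    intros x Fx. destruct (l_cover x (FK x Fx)) as [[j|] [j_in Vjx]].
    + exists j. split; [|exact Vjx].
      apply in_flat_map. exists (Some j). simpl. auto.
    + contradiction.
Qed.

(* Indexing the cover by the members that meet K makes the extracted finite
   subcover consist of such members only. *)
Lemma mcompact_subcover_meeting (K : M -> Prop) {I : Type} (W : I -> M -> Prop) :
  mcompact d K -> (forall a, mopen d (W a)) -> (forall x, K x -> exists a, W a x) ->
  exists l : list I,
    (forall a, In a l -> exists y, K y /\ W a y) /\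
    (forall x, K x -> exists a, In a l /\ W a x).
Proof.
  intros K_compact W_open W_cover.
  set (meeting := {a : I | exists y, K y /\ W a y}).
  destruct (K_compact meeting (fun j => W (proj1_sig j))) as [l l_cover].
  - intros j. apply W_open.
  - intros x Kx. destruct (W_cover x Kx) as [a Wax].
    now exists (exist _ a (ex_intro _ x (conj Kx Wax))).
  - exists (map (@proj1_sig _ _) l). split.
    + intros a a_in. apply in_map_iff in a_in as [[b b_meets] [<- _]].
      exact b_meets.
    + intros x Kx. destruct (l_cover x Kx) as [j [j_in Wjx]].
      exists (proj1_sig j). split; [apply in_map, j_in | exact Wjx].
Qed.

Lemma locally_finite_on_mono {I : Type} (J : I -> Prop) (F G : I -> M -> Prop) :
  (forall a x, F a x -> G a x) ->
  locally_finite_on d J G -> locally_finite_on d J F.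
Proof.
  intros FG G_lf p [a [Ja Fap]].
  destruct (G_lf p) as [V [V_open [Vp [l l_spec]]]].
  { exists a. split; [exact Ja | exact (FG a p Fap)]. }
  exists V. split; [exact V_open|]. split; [exact Vp|].
  exists l. intros b Jb [x [Vx Fbx]]. apply l_spec; [exact Jb|].
  exists x. split; [exact Vx | exact (FG b x Fbx)].
Qed.

Hypothesis d_metric : is_metric d.

Lemma dist_self (x : M) : d x x = 0.
Proof. apply d_metric. reflexivity. Qed.

Lemma dist_sym (x y : M) : d x y = d y x.
Proof. apply d_metric. Qed.

Lemma dist_triangle (x y z : M) : d x z <= d x y + d y z.
Proof. apply d_metric. Qed.

Lemma mopen_ball (p : M) (r : R) : mopen d (fun y => d p y < r).
Proof.
  intros x dx. exists (r - d p x). split; [lra|].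
  intros y dy. pose proof (dist_triangle p x y). lra.
Qed.

Lemma mclosed_dist_ge (o : M) (r : R) : mclosed d (fun x => r <= d o x).
Proof.
  intros x dx. exists (r - d o x). split; [lra|].
  intros y dy. pose proof (dist_triangle o x y). lra.
Qed.

Lemma mclosed_dist_le (o : M) (r : R) : mclosed d (fun x => d o x <= r).
Proof.
  intros x dx. exists (d o x - r). split; [lra|].
  intros y dy. pose proof (dist_triangle o y x). rewrite (dist_sym y x) in *. lra.
Qed.

Lemma locally_finite_far_shells (o : M) {I : Type} (l : nat -> list I)
    (C : I -> M -> Prop) :
  (forall a, diam_lt1 d (C a)) ->
  (forall n a, In a (l n) -> exists y, C a y /\ INR n <= d o y) ->
  locally_finite_on d (fun a => exists n, In a (l n)) C.
Proof.
  intros C_small C_far p _.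
  exists (fun y => d p y < 1). split; [apply mopen_ball|]. split.
  { rewrite dist_self. lra. }
  destruct (INR_unbounded (d o p + 2)) as [N N_large].
  exists (flat_map l (seq 0 N)).
  intros a [n a_in] [x [px Cax]].
  apply in_flat_map. exists n. split; [|exact a_in].
  apply in_seq. split; [lia|].
  destruct (C_far n a a_in) as [y [Cay n_le]].
  destruct (C_small a) as [r [r_lt1 diam_r]].
  pose proof (diam_r x y Cax Cay).
  pose proof (dist_triangle o p x). pose proof (dist_triangle o x y).
  apply INR_lt. simpl. lra.
Qed.

End MetricTopology.

Theorem lemma4p13 (M : Type) (d : M -> M -> R)
  (hmetric : is_metric d) (hproper : proper_metric d)
  (S : M -> Prop) (hS : mclosed d S)
  (I : Type) (W C : I -> M -> Prop)
  (hWopen : forall a, mopen d (W a))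
  (hcover : forall x, S x -> exists a, W a x)
  (hCopen : forall a, mopen d (C a))
  (hWC : forall a x, W a x -> C a x)
  (hdiam : forall a, diam_lt1 d (C a)) :
  exists J : I -> Prop,
    countable_idx J /\
    (forall x, S x -> exists a, J a /\ W a x) /\
    locally_finite_on d J W /\
    locally_finite_on d J C.
Proof.
  destruct (classic (inhabited M)) as [[o] | M_empty].
  2:{ exists (fun _ => False). split; [|split; [|split]].
      - exists (fun _ => 0%nat). intros a b [].
      - intros x. exfalso. exact (M_empty (inhabits x)).
      - intros p. exfalso. exact (M_empty (inhabits p)).
      - intros p. exfalso. exact (M_empty (inhabits p)). }
  set (shell (n : nat) x := S x /\ INR n <= d o x /\ d o x <= INR n + 1).
  assert (shell_compact : forall n, mcompact d (shell n)).
  { intros n. apply (mcompact_closed_subset d (fun x => d o x <= INR n + 1)).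
    - apply hproper.
    - apply mclosed_and; [exact hS|].
      apply mclosed_and; [apply mclosed_dist_ge | apply mclosed_dist_le]; exact hmetric.
    - intros x (_ & _ & x_le). exact x_le. }
  destruct (choice (fun n (l : list I) =>
                      (forall a, In a l -> exists y, shell n y /\ W a y) /\
                      (forall x, shell n x -> exists a, In a l /\ W a x)))
    as [l l_spec].
  { intros n. apply (mcompact_subcover_meeting d); [apply shell_compact | exact hWopen |].
    intros x [Sx _]. exact (hcover x Sx). }
  assert (C_lf : locally_finite_on d (fun a => exists n, In a (l n)) C).
  { apply (locally_finite_far_shells d hmetric o l C hdiam).
    intros n a a_in. destruct (proj1 (l_spec n) a a_in) as [y [(_ & n_le & _) Way]].
    exists y. split; [exact (hWC a y Way) | exact n_le]. }
  exists (fun a => exists n, In a (l n)). split; [|split; [|split]].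
  - apply countable_idx_list_union.
  - intros x Sx. destruct (nat_floor (d o x) (proj1 hmetric o x)) as [n [n_le lt_n1]].
    destruct (proj2 (l_spec n) x (conj Sx (conj n_le (Rlt_le _ _ lt_n1))))
      as [a [a_in Wax]].
    exists a. split; [exists n; exact a_in | exact Wax].
  - exact (locally_finite_on_mono d _ W C hWC C_lf).
  - exact C_lf.
Qed.
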